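(* Let $C$ be a locally connected topos with final object $Z$. Then $C$ is connected if and only if there is a connected topological covering family $(X_i)_{i\in I}$ of $C$ such that for every object $X$ of $C$ and every $i\in I$ there is a path $(i_1=i,i_2,\dots,i_n)$ of $(X_i)_{i\in I}$ such that $X_{i_n}\times_Z X$ is not the initial object.
   Context: $C$ is a topos (endowed with its canonical topology) with final object $Z$. $C$ is connected if there is no covering family $\{S_1,S_2\}$ of $C$ with $S_1\times_Z S_2$ the initial (empty) object. A topological covering family $(X_i)_{i\in I}$ is connected if each topos $C_{X_i}$ (the category of objects over $X_i$) is connected. $C$ is locally connected if for every covering family $(X_i)_{i\in I}$ there is a connected covering family $(Y_j)_{j\in J}$ such that each $Y_j$ is a subobject of some $X_{k(j)}$. A path of a connected covering family $(X_i)_{i\in I}$ is a finite sequence of indices $(i_1,\dots,i_n)$ such that $X_{i_k}\times_Z X_{i_{k+1}}$ is not the initial object for each $k<n$. *)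

From Stdlib Require Import List.
Set Implicit Arguments.

Record Category := {
  ob :> Type;
  hom : ob -> ob -> Type;
  idm : forall A, hom A A;
  comp : forall A B D, hom A B -> hom B D -> hom A D;
  comp_idl : forall A B (f : hom A B), comp (idm A) f = f;
  comp_idr : forall A B (f : hom A B), comp f (idm B) = f;
  comp_assoc : forall A B D E (f : hom A B) (g : hom B D) (h : hom D E),
      comp (comp f g) h = comp f (comp g h)
}.
Arguments hom {c} _ _.
Arguments idm {c} _.
Arguments comp {c A B D} _ _.
(* diagrammatic composition: f ≫ g is "first f, then g" *)
Notation "f ≫ g" := (comp f g) (at level 40, left associativity).

Section Basic.
Variable C : Category.

Definition mono {A B : C} (f : hom A B) : Prop :=
  forall W (a b : hom W A), a ≫ f = b ≫ f -> a = b.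

Definition is_terminal (T : C) : Prop :=
  forall X : C, exists f : hom X T, forall g : hom X T, g = f.

Definition is_initial (I0 : C) : Prop :=
  forall X : C, exists f : hom I0 X, forall g : hom I0 X, g = f.

Definition is_pullback {A B Z P : C} (f : hom A Z) (g : hom B Z)
    (p1 : hom P A) (p2 : hom P B) : Prop :=
  p1 ≫ f = p2 ≫ g /\
  forall Q (q1 : hom Q A) (q2 : hom Q B), q1 ≫ f = q2 ≫ g ->
    exists u : hom Q P, u ≫ p1 = q1 /\ u ≫ p2 = q2 /\
      forall v : hom Q P, v ≫ p1 = q1 -> v ≫ p2 = q2 -> v = u.

Definition is_product {A B P : C} (p1 : hom P A) (p2 : hom P B) : Prop :=
  forall Q (q1 : hom Q A) (q2 : hom Q B),
    exists u : hom Q P, u ≫ p1 = q1 /\ u ≫ p2 = q2 /\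
      forall v : hom Q P, v ≫ p1 = q1 -> v ≫ p2 = q2 -> v = u.

Definition is_coproduct {I : Type} (X : I -> C) (S : C)
    (inj : forall i, hom (X i) S) : Prop :=
  forall Y (f : forall i, hom (X i) Y),
    exists u : hom S Y, (forall i, inj i ≫ u = f i) /\
      forall v : hom S Y, (forall i, inj i ≫ v = f i) -> v = u.

(** Exponential [E] of [B] by [A] with evaluation [ev : E × A -> B]. *)
Definition is_exponential (A B E P : C) (e1 : hom P E) (e2 : hom P A)
    (ev : hom P B) : Prop :=
  is_product e1 e2 /\
  forall X Q (q1 : hom Q X) (q2 : hom Q A) (f : hom Q B), is_product q1 q2 ->
    exists u : hom X E,
      (exists m : hom Q P, m ≫ e1 = q1 ≫ u /\ m ≫ e2 = q2 /\ m ≫ ev = f) /\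
      forall u' : hom X E,
        (exists m : hom Q P, m ≫ e1 = q1 ≫ u' /\ m ≫ e2 = q2 /\ m ≫ ev = f) ->
        u' = u.

Definition is_subobject_classifier (T Om : C) (tru : hom T Om) : Prop :=
  is_terminal T /\
  forall S X (m : hom S X), mono m ->
    exists chi : hom X Om,
      (forall s : hom S T, is_pullback chi tru m s) /\
      forall chi' : hom X Om, (forall s : hom S T, is_pullback chi' tru m s) ->
        chi' = chi.
End Basic.
Arguments mono {C A B} f.
Arguments is_terminal {C} T.
Arguments is_initial {C} I0.
Arguments is_pullback {C A B Z P} f g p1 p2.
Arguments is_product {C A B P} p1 p2.
Arguments is_coproduct {C I} X {S} inj.
Arguments is_exponential {C A B E P} e1 e2 ev.
Arguments is_subobject_classifier {C T Om} tru.

(** * Grothendieck toposes (Giraud-style characterisation: an elementary topos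
    -- finite limits, cartesian closed, subobject classifier -- which moreover
    has all small coproducts and a small generating family). *)
Record Topos := {
  tcat :> Category;
  t_terminal : exists T : tcat, is_terminal T;
  t_pullbacks : forall (A B Z : tcat) (f : hom A Z) (g : hom B Z),
      exists P (p1 : hom P A) (p2 : hom P B), is_pullback f g p1 p2;
  t_exponentials : forall A B : tcat,
      exists E P (e1 : hom P E) (e2 : hom P A) (ev : hom P B),
        is_exponential e1 e2 ev;
  t_classifier : exists (T Om : tcat) (tru : hom T Om),
      is_subobject_classifier tru;
  t_coproducts : forall (I : Type) (X : I -> tcat),
      exists S (inj : forall i, hom (X i) S), is_coproduct X inj;
  t_generators : exists (G : Type) (g : G -> tcat),
      forall (X Y : tcat) (f h : hom X Y),
        (forall s (x : hom (g s) X), x ≫ f = x ≫ h) -> f = h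
}.

Section Connectedness.
Variable C : Topos.
Variable Z : C. (* the final object *)

(** A family of objects covers [C] (canonical topology): the family of
    (unique) maps [X i -> Z] is jointly epimorphic. *)
Definition covers {I : Type} (X : I -> C) : Prop :=
  forall Y (f g : hom Z Y),
    (forall i (h : hom (X i) Z), h ≫ f = h ≫ g) -> f = g.

Definition fiber_initial (A B : C) : Prop :=
  exists P (p1 : hom P A) (p2 : hom P B) (a : hom A Z) (b : hom B Z),
    is_pullback a b p1 p2 /\ is_initial P.

Definition pair_fam (S1 S2 : C) : bool -> C := fun b => if b then S1 else S2.

Definition connected : Prop :=
  ~ exists S1 S2 : C,
      ~ is_initial S1 /\ ~ is_initial S2 /\
      covers (pair_fam S1 S2) /\ fiber_initial S1 S2.

(** The same notions in the slice topos [C_X], unfolded (objects of [C_X]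
    are arrows [S -> X], its final object is [idm X]). *)
Definition slice_initial {X P : C} (p : hom P X) : Prop :=
  forall Y (y : hom Y X), exists u : hom P Y, u ≫ y = p /\
    forall v : hom P Y, v ≫ y = p -> v = u.

Definition slice_covers {X : C} {K : Type} {S : K -> C}
    (f : forall k, hom (S k) X) : Prop :=
  forall Y (y : hom Y X) (u v : hom X Y), u ≫ y = idm X -> v ≫ y = idm X ->
    (forall k, f k ≫ u = f k ≫ v) -> u = v.

Definition slice_product {X S1 S2 P : C} (f1 : hom S1 X) (f2 : hom S2 X)
    (p : hom P X) (q1 : hom P S1) (q2 : hom P S2) : Prop :=
  q1 ≫ f1 = p /\ q2 ≫ f2 = p /\
  forall Q (q : hom Q X) (r1 : hom Q S1) (r2 : hom Q S2),
    r1 ≫ f1 = q -> r2 ≫ f2 = q ->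
    exists u : hom Q P, u ≫ p = q /\ u ≫ q1 = r1 /\ u ≫ q2 = r2 /\
      forall v : hom Q P, v ≫ p = q -> v ≫ q1 = r1 -> v ≫ q2 = r2 -> v = u.

Definition slice_pair {X S1 S2 : C} (f1 : hom S1 X) (f2 : hom S2 X)
  : forall b : bool, hom (pair_fam S1 S2 b) X :=
  fun b => match b with true => f1 | false => f2 end.

Definition slice_connected (X : C) : Prop :=
  ~ exists S1 S2 (f1 : hom S1 X) (f2 : hom S2 X),
      ~ slice_initial f1 /\ ~ slice_initial f2 /\
      slice_covers (slice_pair f1 f2) /\
      exists P (p : hom P X) (q1 : hom P S1) (q2 : hom P S2),
        slice_product f1 f2 p q1 q2 /\ slice_initial p.

Definition connected_covering {I : Type} (X : I -> C) : Prop :=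
  covers X /\ forall i, slice_connected (X i).

Definition locally_connected : Prop :=
  forall (I : Type) (X : I -> C), covers X ->
    exists (J : Type) (Y : J -> C) (k : J -> I),
      connected_covering Y /\
      forall j, exists m : hom (Y j) (X (k j)), mono m.

Fixpoint chain {I : Type} (X : I -> C) (i : I) (l : list I) : Prop :=
  match l with
  | nil => True
  | j :: l' => ~ fiber_initial (X i) (X j) /\ chain X j l'
  end.

Definition is_path {I : Type} (X : I -> C) (p : list I) : Prop :=
  match p with
  | nil => False
  | i :: l => chain X i l
  end.
End Connectedness.
Arguments covers {C} Z {I} X.
Arguments fiber_initial {C} Z A B.
Arguments connected {C} Z.
Arguments slice_connected {C} X.
Arguments connected_covering {C} Z {I} X.
Arguments locally_connected {C} Z.
Arguments chain {C} Z {I} X i l.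
Arguments is_path {C} Z {I} X p.

(** Suppose [C] is covered by disjoint non-initial [S1], [S2]. Since each [C_{X_i}]
    is connected and [X_i] is covered by [X_i ×_Z S1] and [X_i ×_Z S2], which are
    disjoint, one of them is initial: every [X_i] lies entirely on one side.
    Not every [X_i] lies on the [S1] side, since [S1] is non-initial and covered by
    the [X_i ×_Z S1]; so some [X_i] lies on the [S2] side. Along a path the side
    cannot change, because members on opposite sides have initial fibre product;
    the path from [i] required for [Y = S2] then ends in an [X_j] with
    [X_j ×_Z S2] non-initial, a contradiction. Conversely, if [C] is connected,
    the single object [Z] is a connected covering (as [C_Z] is [C]) and
    [Z ×_Z Y ≅ Y].

    The topos structure enters only through three facts: initial objects are
    strict and covering families are stable under pullback (both via
    exponentials), and an object covered by initial objects is initial (via the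
    subobject classifier). *)
From Stdlib Require Import List Classical.

Arguments comp_idl {c A B} f.
Arguments comp_idr {c A B} f.
Arguments comp_assoc {c A B D E} f g h.
Arguments pair_fam {C} S1 S2 _.
Arguments slice_initial {C X P} p.

Lemma last_cons_default {A : Type} (l : list A) (j d : A) :
  last (j :: l) d = last l j.
Proof.
  revert j d. induction l as [|x l IH]; intros j d; [reflexivity|].
  change (last (x :: l) d = last (x :: l) j). rewrite !IH. reflexivity.
Qed.

Section CategoryFacts.
Context {C : Category}.

Lemma terminal_hom_eq {T : C} (hT : is_terminal T) {X : C} (f g : hom X T) : f = g.
Proof. destruct (hT X) as [t Ht]. rewrite (Ht f), (Ht g). reflexivity. Qed.

Lemma initial_hom_eq {O : C} (hO : is_initial O) {W : C} (f g : hom O W) : f = g.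
Proof. destruct (hO W) as [t Ht]. rewrite (Ht f), (Ht g). reflexivity. Qed.

Lemma initial_retract {A P : C} (s : hom A P) (r : hom P A) :
  s ≫ r = idm A -> is_initial P -> is_initial A.
Proof.
  intros Hsr hP W. destruct (hP W) as [t Ht]. exists (s ≫ t). intros g.
  rewrite <- (comp_idl g), <- Hsr, comp_assoc, (Ht (r ≫ g)). reflexivity.
Qed.

Lemma pullback_terminal_product {T A B P : C} (hT : is_terminal T)
    {a : hom A T} {b : hom B T} {p1 : hom P A} {p2 : hom P B} :
  is_pullback a b p1 p2 -> is_product p1 p2.
Proof. intros [_ U] Q q1 q2. apply U, (terminal_hom_eq hT). Qed.

Lemma product_terminal_l {T A : C} (hT : is_terminal T) (a : hom A T) :
  is_product a (idm A).
Proof.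
  intros Q q1 q2. exists q2. split; [apply (terminal_hom_eq hT)|].
  split; [apply comp_idr|]. intros v _ Hv. rewrite comp_idr in Hv. exact Hv.
Qed.
End CategoryFacts.

Section ToposFacts.
Context {C : Topos}.

Lemma initial_exists : exists O : C, is_initial O.
Proof.
  destruct (@t_coproducts C Empty_set (fun e => match e with end)) as [O [inj H]].
  exists O. intros Y. destruct (H Y (fun e => match e with end)) as [u [_ Hu]].
  exists u. intros v. apply Hu. intros [].
Qed.

(* [Q ≅ P × A] with [P] initial: the transpose [P -> W^A] of any [Q -> W] is forced. *)
Lemma product_initial_l {P A Q : C} (q1 : hom Q P) (q2 : hom Q A) :
  is_initial P -> is_product q1 q2 -> is_initial Q.
Proof.
  intros hP Hq W.
  destruct (t_exponentials C A W) as [E [P' [e1 [e2 [ev [Hprod Hexp]]]]]].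
  destruct (hP E) as [z Hz].
  destruct (Hprod Q (q1 ≫ z) q2) as [m [_ [_ Hm]]].
  exists (m ≫ ev). intros g.
  destruct (Hexp P Q q1 q2 g Hq) as [u [[m' [H1 [H2 H3]]] _]].
  rewrite (Hz u) in H1. rewrite <- H3. f_equal. exact (Hm m' H1 H2).
Qed.

(* [A] is a retract of [P × A] through [(f, idm A)]. *)
Lemma initial_strict {A P : C} (f : hom A P) : is_initial P -> is_initial A.
Proof.
  intros hP.
  destruct (t_terminal C) as [T hT].
  destruct (hT P) as [tP _]. destruct (hT A) as [tA _].
  destruct (t_pullbacks C P A T tP tA) as [Q [q1 [q2 Hpb]]].
  pose proof (pullback_terminal_product hT Hpb) as Hq.
  destruct (Hq A f (idm A)) as [s [_ [Hs _]]].
  exact (initial_retract s q2 Hs (product_initial_l q1 q2 hP Hq)).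
Qed.

Definition jointly_epic {A : C} (R : forall P : C, hom P A -> Prop) : Prop :=
  forall W (f g : hom A W), (forall P (p : hom P A), R P p -> p ≫ f = p ≫ g) -> f = g.

(* The characteristic map of [O -> A] agrees with [true] on the family, hence everywhere. *)
Lemma jointly_epic_initial {A : C} {R : forall P : C, hom P A -> Prop} :
  jointly_epic R -> (forall P p, R P p -> is_initial P) -> is_initial A.
Proof.
  intros HR Hinit.
  destruct initial_exists as [O hO]. destruct (hO A) as [o _].
  destruct (t_classifier C) as [T [Om [tru [hT Hcl]]]].
  assert (Ho : mono o) by (intros W a b _; apply (initial_hom_eq (initial_strict a hO))).
  destruct (Hcl O A o Ho) as [chi [Hpb _]].
  destruct (hT A) as [tA _]. destruct (hT O) as [tO _].
  assert (Hchi : chi = tA ≫ tru).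
  { apply HR. intros P p HP. apply (initial_hom_eq (Hinit P p HP)). }
  destruct (Hpb tO) as [_ U].
  destruct (U A (idm A) tA) as [u _]; [rewrite comp_idl; exact Hchi|].
  exact (initial_strict u hO).
Qed.

Section OverTerminal.
Context {Z : C} (hZ : is_terminal Z).

(* Pulling back along [a : A -> Z]: maps [A -> W] correspond to maps [Z -> W^A],
   and the cover [X] separates the latter. *)
Lemma covers_pullback {I : Type} {X : I -> C} : covers Z X -> forall A : C,
  jointly_epic (fun P (_ : hom P A) => exists i, inhabited (hom P (X i))).
Proof.
  intros HX A W f g Hfg.
  destruct (hZ A) as [a _].
  destruct (t_exponentials C A W) as [E [P' [e1 [e2 [ev [Hprod Hexp]]]]]].
  pose proof (product_terminal_l hZ a) as Ha.
  destruct (Hexp Z A a (idm A) f Ha) as [uf [[mf [F1 [F2 F3]]] _]].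
  destruct (Hexp Z A a (idm A) g Ha) as [ug [[mg [G1 [G2 G3]]] _]].
  assert (Huf : uf = ug).
  { apply HX. intros i x.
    destruct (t_pullbacks C (X i) A Z x a) as [Pi [p1 [p2 Hpb]]].
    pose proof (pullback_terminal_product hZ Hpb) as Hpi.
    destruct (Hexp (X i) Pi p1 p2 (p2 ≫ f) Hpi) as [u [_ Hu]].
    assert (Hsq : p1 ≫ x = p2 ≫ a) by apply (terminal_hom_eq hZ).
    assert (Hp2 : p2 ≫ f = p2 ≫ g) by (apply Hfg; exists i; exact (inhabits p1)).
    rewrite (Hu (x ≫ uf)), (Hu (x ≫ ug)); [reflexivity| |].
    - exists (p2 ≫ mg). repeat split.
      + rewrite comp_assoc, G1, <- comp_assoc, <- Hsq, comp_assoc. reflexivity.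
      + rewrite comp_assoc, G2, comp_idr. reflexivity.
      + rewrite comp_assoc, G3, Hp2. reflexivity.
    - exists (p2 ≫ mf). repeat split.
      + rewrite comp_assoc, F1, <- comp_assoc, <- Hsq, comp_assoc. reflexivity.
      + rewrite comp_assoc, F2, comp_idr. reflexivity.
      + rewrite comp_assoc, F3. reflexivity. }
  subst ug.
  destruct (Hprod A (a ≫ uf) (idm A)) as [m [_ [_ Hm]]].
  rewrite <- F3, <- G3, (Hm mf F1 F2), (Hm mg G1 G2). reflexivity.
Qed.

Lemma covers_initial {I : Type} {X : I -> C} {A : C} : covers Z X ->
  (forall i P, hom P A -> hom P (X i) -> is_initial P) -> is_initial A.
Proof.
  intros HX Hinit. apply (jointly_epic_initial (covers_pullback HX A)).
  intros P p [i [x]]. exact (Hinit i P p x).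
Qed.

Lemma fiber_initialP (A B : C) :
  fiber_initial Z A B <-> forall Q, hom Q A -> hom Q B -> is_initial Q.
Proof.
  split.
  - intros [P [p1 [p2 [a [b [[_ U] hP]]]]]] Q q1 q2.
    destruct (U Q q1 q2 (terminal_hom_eq hZ _ _)) as [u _].
    exact (initial_strict u hP).
  - intros Hinit. destruct (hZ A) as [a _]. destruct (hZ B) as [b _].
    destruct (t_pullbacks C A B Z a b) as [P [p1 [p2 Hpb]]].
    exists P, p1, p2, a, b. split; [exact Hpb|]. exact (Hinit P p1 p2).
Qed.

Lemma slice_initialP {X P : C} (p : hom P X) : slice_initial p <-> is_initial P.
Proof.
  split.
  - intros Hp. destruct initial_exists as [O hO]. destruct (hO X) as [o _].
    destruct (Hp O o) as [u _]. exact (initial_strict u hO).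
  - intros hP Y y. destruct (hP Y) as [u Hu]. exists u.
    split; [apply (initial_hom_eq hP)|]. intros v _. apply Hu.
Qed.

Lemma slice_connected_terminal : connected Z -> slice_connected Z.
Proof.
  intros Hconn [S1 [S2 [f1 [f2 [N1 [N2 [Hcov [P [p [q1 [q2 [Hprod HP]]]]]]]]]]]].
  apply Hconn. exists S1, S2. repeat split.
  - intros H1. apply N1, slice_initialP, H1.
  - intros H2. apply N2, slice_initialP, H2.
  - intros Y f g Hfg. destruct (hZ Y) as [y _].
    apply (Hcov Y y f g (terminal_hom_eq hZ _ _) (terminal_hom_eq hZ _ _)).
    intros [|]; apply Hfg.
  - apply fiber_initialP. intros Q r1 r2.
    destruct Hprod as [_ [_ U]].
    destruct (U Q (r1 ≫ f1) r1 r2 eq_refl (terminal_hom_eq hZ _ _)) as [u _].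
    exact (initial_strict u (proj1 (slice_initialP p) HP)).
Qed.

Section DisjointCover.
Context {S1 S2 : C} (Hcov : covers Z (pair_fam S1 S2)) (Hdisj : fiber_initial Z S1 S2).

(* Otherwise [X ×_Z S1 -> X] and [X ×_Z S2 -> X] disconnect [C_X]. *)
Lemma slice_connected_one_side (X : C) :
  slice_connected X -> fiber_initial Z X S1 \/ fiber_initial Z X S2.
Proof.
  intros Hsc.
  destruct (classic (fiber_initial Z X S1)) as [H1|N1]; [left; exact H1|].
  destruct (classic (fiber_initial Z X S2)) as [H2|N2]; [right; exact H2|].
  exfalso. apply Hsc.
  destruct (hZ X) as [x _]. destruct (hZ S1) as [s1 _]. destruct (hZ S2) as [s2 _].
  destruct (t_pullbacks C X S1 Z x s1) as [P1 [a1 [b1 Hpb1]]].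
  destruct (t_pullbacks C X S2 Z x s2) as [P2 [a2 [b2 Hpb2]]].
  exists P1, P2, a1, a2. repeat split.
  - intros H. apply N1, fiber_initialP. intros Q q1 q2.
    destruct Hpb1 as [_ U]. destruct (U Q q1 q2 (terminal_hom_eq hZ _ _)) as [u _].
    exact (initial_strict u (proj1 (slice_initialP a1) H)).
  - intros H. apply N2, fiber_initialP. intros Q q1 q2.
    destruct Hpb2 as [_ U]. destruct (U Q q1 q2 (terminal_hom_eq hZ _ _)) as [u _].
    exact (initial_strict u (proj1 (slice_initialP a2) H)).
  - intros Y y u v _ _ Huv. apply (covers_pullback Hcov X).
    intros P p [[|] [s]].
    + destruct Hpb1 as [_ U]. destruct (U P p s (terminal_hom_eq hZ _ _)) as [w [<- _]].
      rewrite !comp_assoc. f_equal. exact (Huv true).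
    + destruct Hpb2 as [_ U]. destruct (U P p s (terminal_hom_eq hZ _ _)) as [w [<- _]].
      rewrite !comp_assoc. f_equal. exact (Huv false).
  - destruct (t_pullbacks C P1 P2 X a1 a2) as [P [r1 [r2 [Hsq U]]]].
    exists P, (r1 ≫ a1), r1, r2. split; [repeat split|].
    + symmetry. exact Hsq.
    + intros Q q t1 t2 Ht1 Ht2.
      destruct (U Q t1 t2 (eq_trans Ht1 (eq_sym Ht2))) as [u [Hu1 [Hu2 Hu]]].
      exists u. repeat split; try assumption.
      * rewrite <- comp_assoc, Hu1. exact Ht1.
      * intros v _ Hv1 Hv2. apply Hu; assumption.
    + apply slice_initialP. exact (proj1 (fiber_initialP S1 S2) Hdisj P (r1 ≫ b1) (r2 ≫ b2)).
Qed.

Lemma fiber_initial_propagate (X X' : C) : slice_connected X' ->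
  fiber_initial Z X S2 -> ~ fiber_initial Z X X' -> fiber_initial Z X' S2.
Proof.
  intros Hsc H2 Hmeet.
  destruct (slice_connected_one_side X' Hsc) as [H1|]; [|assumption].
  exfalso. apply Hmeet, fiber_initialP. intros Q q q'.
  apply (covers_initial Hcov). intros [|] P p s.
  - exact (proj1 (fiber_initialP X' S1) H1 P (p ≫ q') s).
  - exact (proj1 (fiber_initialP X S2) H2 P (p ≫ q) s).
Qed.

Lemma covering_meets_second_side {I : Type} {X : I -> C} : ~ is_initial S1 ->
  connected_covering Z X -> exists i, fiber_initial Z (X i) S2.
Proof.
  intros N1 [HX Hsc]. apply NNPP. intros Hnone. apply N1, (covers_initial HX).
  intros i P s x.
  destruct (slice_connected_one_side (X i) (Hsc i)) as [H1|H2].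
  - exact (proj1 (fiber_initialP (X i) S1) H1 P x s).
  - exfalso. apply Hnone. exists i. exact H2.
Qed.

Lemma chain_fiber_initial {I : Type} (X : I -> C) :
  (forall i, slice_connected (X i)) -> forall l i,
  chain Z X i l -> fiber_initial Z (X i) S2 -> fiber_initial Z (X (last l i)) S2.
Proof.
  intros Hsc l. induction l as [|j l IH]; intros i Hchain H2; [exact H2|].
  destruct Hchain as [Hmeet Hchain].
  rewrite last_cons_default.
  exact (IH j Hchain (fiber_initial_propagate (X i) (X j) (Hsc j) H2 Hmeet)).
Qed.
End DisjointCover.
End OverTerminal.
End ToposFacts.

Theorem proposition1p9 (C : Topos) (Z : C) (hZ : is_terminal Z)
    (hloc : locally_connected Z) :
  connected Z <->
  exists (I : Type) (X : I -> C),
    connected_covering Z X /\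
    forall (Y : C) (i : I), ~ is_initial Y ->
      exists l : list I,
        is_path Z X (i :: l) /\ ~ fiber_initial Z (X (last l i)) Y.
Proof.
  split.
  - intros Hconn. exists unit, (fun _ => Z). repeat split.
    + intros Y f g H. specialize (H tt (idm Z)). rewrite !comp_idl in H. exact H.
    + intros _. exact (slice_connected_terminal hZ Hconn).
    + intros Y i NY. exists nil. split; [exact I|].
      intros H. apply NY. destruct (hZ Y) as [y _].
      exact (proj1 (fiber_initialP hZ Z Y) H Y y (idm Y)).
  - intros [I [X [HXcc Hpath]]] [S1 [S2 [N1 [N2 [Hcov Hdisj]]]]].
    destruct (covering_meets_second_side hZ Hcov Hdisj N1 HXcc) as [i H2].
    destruct (Hpath S2 i N2) as [l [Hchain Hend]].
    exact (Hend (chain_fiber_initial hZ Hcov Hdisj X (proj2 HXcc) l i Hchain H2)).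
Qed.
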